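(* Let $k$ be a field, $R=k[x_1,\ldots,x_n]$ localized at $(x_1,\ldots,x_n)$, and let $\Delta$ be a tree with vertex set $\{x_1,\ldots,x_n\}$ and facet ideal $I=\mathcal{F}(\Delta)$. Then $I$ satisfies condition $\mathcal{F}_1$, i.e. $\mu(I_p)\le\dim R_p$ for every prime ideal $p$ of $R$ with $I\subseteq p$, where $\mu$ denotes the minimal number of generators.
   Context: A simplicial complex on a vertex set $V$ is a collection of subsets of $V$ containing all singletons and closed under subsets; its facets are its maximal faces. Vertices are identified with variables. The facet ideal $\mathcal{F}(\Delta)$ is generated by $\prod_{x_j\in F}x_j$, $F$ a facet. A subcomplex of $\Delta$ is a simplicial complex whose facet set is a subset of that of $\Delta$. $\Delta$ is connected if any two facets are joined by a chain of facets with consecutive members intersecting. A facet $F$ is a leaf if either $F$ is the only facet, or there is a facet $G\neq F$ with $F\cap F'\subseteq F\cap G$ for every facet $F'\neq F$. A connected $\Delta$ is a tree if every nonempty subcomplex has a leaf. *)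

From HB Require Import structures.
From mathcomp Require Import all_boot all_order all_algebra.
From mathcomp Require Export mpoly.
Set Implicit Arguments. Unset Strict Implicit. Unset Printing Implicit Defensive.
Import GRing.Theory.
Local Open Scope ring_scope.

(* Vertex x_i is identified with i : 'I_n.  A simplicial complex is
   represented by its set of facets F : {set {set 'I_n}}. *)

Definition is_complex (n : nat) (F : {set {set 'I_n}}) : Prop :=
  (forall A B, A \in F -> B \in F -> A \subset B -> A = B) /\
  (forall v : 'I_n, exists2 A, A \in F & v \in A).

Definition is_leaf (n : nat) (G : {set {set 'I_n}}) (A : {set 'I_n}) : Prop :=
  A \in G /\
  (G = [set A] \/
   exists2 B, (B \in G) && (B != A) &
     forall A', A' \in G -> A' != A -> A :&: A' \subset A :&: B).

Definition facet_adj (n : nat) (F : {set {set 'I_n}}) : rel {set 'I_n} :=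
  fun A B => [&& A \in F, B \in F & A :&: B != set0].

Definition connected_complex (n : nat) (F : {set {set 'I_n}}) : Prop :=
  forall A B, A \in F -> B \in F -> connect (facet_adj F) A B.

Definition is_tree (n : nat) (F : {set {set 'I_n}}) : Prop :=
  is_complex F /\ connected_complex F /\
  forall G : {set {set 'I_n}}, G \subset F -> G != set0 ->
    exists A, is_leaf G A.

Section Ideals.
Variables (k : fieldType) (n : nat).
Local Notation P := {mpoly k[n]}.

Definition in_span (s : seq P) (f : P) : Prop :=
  exists a : nat -> P, f = \sum_(i < size s) a i * s`_i.

Definition prime_ideal (J : P -> Prop) : Prop :=
  [/\ J 0,
      (forall f g, J f -> J g -> J (f + g)),
      (forall r f, J f -> J (r * f)),
      ~ J 1 &
      (forall f g, J (f * g) -> J f \/ J g)].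

Definition var_ideal (f : P) : Prop :=
  in_span [seq 'X_i | i <- enum 'I_n] f.

Definition facet_monom (A : {set 'I_n}) : P := \prod_(i in A) 'X_i.

Definition facet_ideal (F : {set {set 'I_n}}) (f : P) : Prop :=
  in_span [seq facet_monom A | A <- enum F] f.

(* In the localization k[x]_Q, the ideal J_Q is generated by (the images of)
   the list g of elements of J: for every f in J there is t not in Q with
   t * f in the ideal (g) of k[x].  (Generators of J_Q can always be taken to
   be elements of J, denominators being units.) *)
Definition loc_generates (J Q : P -> Prop) (g : seq P) : Prop :=
  (forall x, x \in g -> J x) /\
  (forall f, J f -> exists2 t, ~ Q t & in_span g (t * f)).

Definition height_ge (Q : P -> Prop) (h : nat) : Prop :=
  exists c : nat -> P -> Prop,
    [/\ (forall i, (i <= h)%N -> prime_ideal (c i)),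
        (forall i, (i < h)%N ->
           (forall f, c i f -> c i.+1 f) /\ exists f, c i.+1 f /\ ~ c i f) &
        (forall f, c h f <-> Q f)].

End Ideals.

(* In the local ring at Q, a variable x_i is a unit unless x_i lies in Q, so
   the facet monomial of B becomes, up to a unit, the monomial of its trace
   B ∩ S, where S is the set of variables in Q.  Since every facet meets S
   and Δ is a tree, stripping leaves one at a time yields at most |S| facets
   whose traces divide the traces of all the others (a leaf either owns a
   vertex of S shared with no other facet, which can be discarded together
   with it, or has its trace inside its neighbour, which can be discarded).
   On the other hand the ideals (x_s1, ..., x_si), s_j in S, form a chain of
   primes under Q, so |S| <= height Q. *)

From mathcomp Require Import all_boot all_algebra.
From mathcomp Require Import mpoly ring boolp.
Set Implicit Arguments. Unset Strict Implicit. Unset Printing Implicit Defensive.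
Import GRing.Theory.
Local Open Scope ring_scope.

Section TraceCover.
Variable n : nat.
Implicit Types (G H : {set {set 'I_n}}) (A B S : {set 'I_n}).

Definition covers_on S H G :=
  forall B, B \in G -> exists2 C, C \in H & C :&: S \subset B.

Lemma leaf_private_or_sub G A S :
  is_leaf G A -> A :&: S != set0 ->
  (exists2 v, v \in A :&: S & forall A', A' \in G -> A' != A -> v \notin A') \/
  (exists2 B, B \in G /\ B != A & A :&: S \subset B).
Proof.
case=> AG [GA | [B /andP [BG BA] leafB]] /set0Pn [v vAS].
  by left; exists v => // A'; rewrite GA inE => ->.
have [/forall_inP shared | /forall_inPn [u uAS /exists_inPn priv]] :=
  boolP [forall (u | u \in A :&: S), [exists (A' | A' \in G), (A' != A) && (u \in A')]].
- right; exists B => //; apply/subsetP => u uAS.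
  have /exists_inP [A' A'G /andP [A'A uA']] := shared u uAS.
  have uAA' : u \in A :&: A' by rewrite inE uA' andbT; case/setIP: uAS.
  by case/setIP: (subsetP (leafB A' A'G A'A) u uAA').
- left; exists u => // A' A'G A'A.
  by have := priv A' A'G; rewrite A'A.
Qed.

Variable F : {set {set 'I_n}}.
Hypothesis leafy : forall G, G \subset F -> G != set0 -> exists A, is_leaf G A.

Lemma tree_trace_cover G S :
  G \subset F -> (forall B, B \in G -> B :&: S != set0) ->
  exists2 G' : {set {set 'I_n}}, G' \subset G & (#|G'| <= #|S|)%N /\ covers_on S G' G.
Proof.
elim: {G}_.+1 {-2}G (ltnSn #|G|) S => // N IH G ltGN S sGF meetS.
have [->|G0] := eqVneq G set0.
  by exists set0; rewrite ?sub0set ?cards0 //; split=> // B; rewrite inE.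
have [A leafA] := leafy sGF G0; have AG := leafA.1.
have subGF B : G :\ B \subset F by apply: subset_trans sGF; apply: subsetDl.
have ltGBN B : B \in G -> (#|G :\ B| < N)%N.
  by move=> BG; move: ltGN; rewrite (cardsD1 B G) BG.
case: (leaf_private_or_sub leafA (meetS A AG)) => [[v vAS priv] | [B [BG BA] sAB]].
- have vS : v \in S by case/setIP: vAS.
  have traceD B : B \in G :\ A -> B :&: (S :\ v) = B :&: S.
    case/setD1P=> BA BG; apply/setP=> x; rewrite !inE.
    by case: eqP => [->|] //=; rewrite (negbTE (priv B BG BA)).
  have meetSv B : B \in G :\ A -> B :&: (S :\ v) != set0.
    by move=> BGA; rewrite traceD // meetS //; case/setD1P: BGA.
  have [G1 sG1 [cG1 covG1]] := IH _ (ltGBN A AG) (S :\ v) (subGF A) meetSv.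
  exists (A |: G1).
    by rewrite subUset sub1set AG (subset_trans sG1) ?subsetDl.
  split.
    by rewrite cardsU1 (cardsD1 v S) vS (leq_add (leq_b1 _) cG1).
  move=> B BG; have [->|BA] := eqVneq B A.
    by exists A; rewrite ?setU11 ?subsetIl.
  have BGA : B \in G :\ A by rewrite !inE BA.
  have [C CG1 sCB] := covG1 B BGA.
  by exists C; rewrite ?setU1r // -traceD // (subsetP sG1).
- have meetSB B' : B' \in G :\ B -> B' :&: S != set0 by case/setD1P=> _ /meetS.
  have [G1 sG1 [cG1 covG1]] := IH _ (ltGBN B BG) S (subGF B) meetSB.
  exists G1; first by rewrite (subset_trans sG1) ?subsetDl.
  split=> // B' B'G; have [->|B'B] := eqVneq B' B; last first.
    by apply: covG1; rewrite !inE B'B.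
  have [C CG1 sCA] : exists2 C, C \in G1 & C :&: S \subset A.
    by apply: covG1; rewrite !inE eq_sym BA.
  (* A covers B, so whatever covers A covers B as well *)
  exists C => //; apply: subset_trans sAB.
  by rewrite subsetI sCA (subset_trans (subsetIr C S)).
Qed.

End TraceCover.

Section Ideals.
Variables (k : fieldType) (n : nat).
Local Notation P := {mpoly k[n]}.
Implicit Types (J Q : P -> Prop) (s : seq P) (f g : P) (T : {set 'I_n}).

Definition is_ideal J :=
  [/\ J 0, forall f g, J f -> J g -> J (f + g) & forall r f, J f -> J (r * f)].

Lemma prime_ideal_ideal Q : prime_ideal Q -> is_ideal Q.
Proof. by case. Qed.

Lemma ideal_sum J (I : Type) (r : seq I) (p : pred I) (G : I -> P) :
  is_ideal J -> (forall i, p i -> J (G i)) -> J (\sum_(i <- r | p i) G i).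
Proof. by case=> J0 JD _ JG; apply: big_ind. Qed.

Lemma in_span_ideal s : is_ideal (in_span s).
Proof.
split.
- by exists (fun _ => 0); rewrite big1 // => i _; rewrite mul0r.
- move=> _ _ [a ->] [b ->]; exists (fun i => a i + b i).
  by rewrite -big_split; apply: eq_bigr => i _; rewrite mulrDl.
- move=> r _ [a ->]; exists (fun i => r * a i).
  by rewrite mulr_sumr; apply: eq_bigr => i _; rewrite mulrA.
Qed.

Lemma mem_in_span s f : f \in s -> in_span s f.
Proof.
move=> fs; exists (fun i => (i == index f s)%:R).
have fi : (index f s < size s)%N by rewrite index_mem.
rewrite (bigD1 (Ordinal fi)) //= eqxx mul1r nth_index //.
by rewrite big1 ?addr0 // => i /negbTE; rewrite -val_eqE /= => ->; rewrite mul0r.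
Qed.

Lemma in_span_min J s f :
  is_ideal J -> (forall g, g \in s -> J g) -> in_span s f -> J f.
Proof.
move=> idJ sJ [a ->]; apply: ideal_sum => // i _.
by case: idJ => _ _ JM; apply/JM/sJ/mem_nth.
Qed.

Lemma prod_notin_prime Q (I : eqType) (r : seq I) (G : I -> P) :
  prime_ideal Q -> (forall i, i \in r -> ~ Q (G i)) -> ~ Q (\prod_(i <- r) G i).
Proof.
case=> _ _ _ Q1 Qprime; elim: r => [|i r IH] QG; first by rewrite big_nil.
rewrite big_cons => /Qprime [].
  by apply: QG; rewrite mem_head.
by apply: IH => j jr; apply: QG; rewrite inE jr orbT.
Qed.

Lemma facet_monom_notin_prime Q (A : {set 'I_n}) :
  prime_ideal Q -> (forall i, i \in A -> ~ Q 'X_i) -> ~ Q (facet_monom k A).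
Proof.
move=> Qprime AQ; rewrite /facet_monom -big_enum.
by apply: prod_notin_prime => // i; rewrite mem_enum; apply: AQ.
Qed.

Lemma facet_monom_trace (B C S : {set 'I_n}) : C :&: S \subset B ->
  facet_monom k (~: S) * facet_monom k B =
  facet_monom k C * (facet_monom k (B :\: (C :&: S)) * facet_monom k (~: S :\: C)).
Proof.
move=> sCB; rewrite /facet_monom.
rewrite [\prod_(i in B) _](big_setID (C :&: S)) (setIidPr sCB).
rewrite [\prod_(i in ~: S) _](big_setID C) [\prod_(i in C) _](big_setID S) /=.
rewrite [C :\: S]setDE [C :&: ~: S]setIC.
set a := \prod_(i in C :&: S) _; set b := \prod_(i in ~: S :&: C) _.
set c := \prod_(i in ~: S :\: C) _; set d := \prod_(i in B :\: (C :&: S)) _.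
ring.
Qed.

Lemma comp_mpolyM (lq : n.-tuple P) : {morph comp_mpoly lq : f g / f * g}.
Proof. exact: (comp_mpoly_is_multiplicative lq).1. Qed.

Lemma prime_ideal_comp_mpoly_ker (lq : n.-tuple P) :
  prime_ideal (fun f => comp_mpoly lq f = 0).
Proof.
split=> [|f g|r f||f g] /=; rewrite ?comp_mpolyD ?comp_mpolyM.
- exact: comp_mpoly0.
- by move=> -> ->; rewrite addr0.
- by move=> ->; rewrite mulr0.
- by rewrite comp_mpoly1 => /eqP; rewrite oner_eq0.
- by move=> /eqP; rewrite mulf_eq0 => /orP [] /eqP; [left|right].
Qed.

(* The elements f with J (f - f(lq)) form a subring containing the variables. *)
Lemma ideal_sub_comp_mpoly J (lq : n.-tuple P) :
  is_ideal J -> (forall i : 'I_n, J ('X_i - comp_mpoly lq 'X_i)) ->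
  forall f, J (f - comp_mpoly lq f).
Proof.
case=> J0 JD JM JX; pose D f := J (f - comp_mpoly lq f).
have DD f g : D f -> D g -> D (f + g).
  move=> Df Dg; rewrite /D comp_mpolyD.
  have -> : f + g - (comp_mpoly lq f + comp_mpoly lq g) =
    (f - comp_mpoly lq f) + (g - comp_mpoly lq g) by ring.
  exact: JD.
have DM f g : D f -> D g -> D (f * g).
  move=> Df Dg; rewrite /D comp_mpolyM.
  have -> : f * g - comp_mpoly lq f * comp_mpoly lq g =
    g * (f - comp_mpoly lq f) + comp_mpoly lq f * (g - comp_mpoly lq g) by ring.
  by apply: JD; apply: JM.
have DC c : D c%:MP by rewrite /D comp_mpolyC subrr.
have D1 : D 1 by rewrite -mpolyC1.
have Dmonom m : D 'X_[m].
  rewrite mpolyXE_id; apply: (big_ind D D1 DM) => i _.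
  by elim: (m i) => [|e IH]; rewrite ?expr0 // exprS; apply: DM.
elim/mpolyind => [|c m p _ _ Dp]; first by rewrite /D comp_mpoly0 subrr.
by apply: DD => //; rewrite -mul_mpolyC; apply: DM.
Qed.

Definition kill_vars (T : {set 'I_n}) : n.-tuple P :=
  [tuple if j \in T then 0 else 'X_j | j < n].

(* The ideal (x_j : j in T), presented as the kernel of the substitution
   x_j |-> 0 for j in T. *)
Definition vars_ideal (T : {set 'I_n}) f := comp_mpoly (kill_vars T) f = 0.

Lemma comp_kill_varsX T j :
  comp_mpoly (kill_vars T) 'X_j = if j \in T then 0 else 'X_j.
Proof. by rewrite comp_mpolyXU -tnth_nth tnth_mktuple. Qed.

Lemma vars_ideal_prime T : prime_ideal (vars_ideal T).
Proof. exact: prime_ideal_comp_mpoly_ker. Qed.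

Lemma vars_idealX T j : vars_ideal T 'X_j <-> j \in T.
Proof.
rewrite /vars_ideal comp_kill_varsX; case: (j \in T); split=> //.
by move/(congr1 (mcoeff U_(j)%MM)); rewrite mcoeffXU eqxx mcoeff0 => /eqP; rewrite oner_eq0.
Qed.

Lemma vars_ideal_min J T f :
  is_ideal J -> (forall j, j \in T -> J 'X_j) -> vars_ideal T f -> J f.
Proof.
move=> idJ TJ Tf; rewrite -[f]subr0 -Tf; apply: ideal_sub_comp_mpoly => // j.
rewrite comp_kill_varsX; case: ifP => jT; first by rewrite subr0; apply: TJ.
by rewrite subrr; case: idJ.
Qed.

(* The chain (x_s1) < (x_s1, x_s2) < ... , with its last member replaced by Q. *)
Lemma height_ge_vars Q (s : seq 'I_n) :
  prime_ideal Q -> uniq s -> (forall j, j \in s -> Q 'X_j) -> height_ge Q (size s).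
Proof.
move=> Qprime us sQ.
pose c i := if (i < size s)%N then vars_ideal [set j in take i s] else Q.
exists c; split=> [i _ | i lti | f]; last by rewrite /c ltnn.
  by rewrite /c; case: ifP => _ //; apply: vars_ideal_prime.
have x0 : 'I_n by case: {c us sQ} s lti.
have take_nthS := take_nth x0 lti.
have /andP [new_nth _] : (nth x0 s i \notin take i s) && uniq (take i s).
  by rewrite -rcons_uniq -take_nthS take_uniq.
have next_ideal : is_ideal (c i.+1).
  by rewrite /c; case: ifP => _; apply: prime_ideal_ideal => //; apply: vars_ideal_prime.
have next_vars j : j \in take i.+1 s -> c i.+1 'X_j.
  rewrite /c; case: ifP => _ jT; first by apply/vars_idealX; rewrite inE.
  exact: sQ (mem_take jT).
rewrite [c i]/c lti; split.
  move=> f; apply: vars_ideal_min => // j; rewrite inE => jT.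
  by apply: next_vars; rewrite take_nthS mem_rcons in_cons jT orbT.
exists 'X_(nth x0 s i); split.
  by apply: next_vars; rewrite take_nthS mem_rcons mem_head.
by move/vars_idealX; rewrite inE (negbTE new_nth).
Qed.

Lemma facet_ideal_monom (F : {set {set 'I_n}}) A :
  A \in F -> facet_ideal F (facet_monom k A).
Proof. by move=> AF; apply/mem_in_span/map_f; rewrite mem_enum. Qed.

(* Outside S the variables are units at Q, so the facet monomial of B equals
   a unit times a multiple of the monomial of any C with C ∩ S inside B. *)
Lemma facet_ideal_loc_generates Q (F H : {set {set 'I_n}}) (S : {set 'I_n}) :
  prime_ideal Q -> (forall i, Q 'X_i -> i \in S) -> H \subset F ->
  covers_on S H F -> loc_generates (facet_ideal F) Q [seq facet_monom k A | A <- enum H].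
Proof.
move=> Qprime SQ sHF covH; set gens := [seq facet_monom k A | A <- enum H].
split=> [_ /mapP [A AH ->] | f Ff].
  by apply/facet_ideal_monom/(subsetP sHF); rewrite -mem_enum.
set t := facet_monom k (~: S).
have [span0 spanD spanM] := in_span_ideal gens.
have ideal_t : is_ideal (fun g => in_span gens (t * g)).
  split=> [|f1 f2 *|r f1 *]; rewrite ?mulr0 ?mulrDr ?[t * (r * _)]mulrCA.
  - exact: span0.
  - exact: spanD.
  - exact: spanM.
exists t.
  by apply: facet_monom_notin_prime => // i; rewrite inE => /negP iS /SQ.
apply: (in_span_min ideal_t _ Ff) => g /mapP [B]; rewrite mem_enum => BF ->.
have [C CH sCB] := covH B BF.
rewrite (facet_monom_trace sCB) mulrC; apply/spanM/mem_in_span/map_f.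
by rewrite mem_enum.
Qed.

End Ideals.

Theorem mainTheorem8 (k : fieldType) (n : nat) (F : {set {set 'I_n}}) :
  is_tree F ->
  forall Q : {mpoly k[n]} -> Prop,
    prime_ideal Q ->
    (forall f, Q f -> var_ideal f) ->
    (forall f, facet_ideal F f -> Q f) ->
    exists (h : nat) (g : seq {mpoly k[n]}),
      size g = h /\ loc_generates (facet_ideal F) Q g /\ height_ge Q h.
Proof.
(* Neither connectedness nor Q <= (x_1, ..., x_n) is needed. *)
move=> [_ [_ leafy]] Q Qprime _ FQ.
pose S := [set i : 'I_n | `[< Q 'X_i >]].
have inS i : reflect (Q 'X_i) (i \in S) by rewrite inE; apply: asboolP.
have meetS B : B \in F -> B :&: S != set0.
  move=> BF; apply/negP => /eqP BS0.
  apply: (facet_monom_notin_prime Qprime (A := B)) => [i iB /inS iS|].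
    have : i \in B :&: S by rewrite inE iB iS.
    by rewrite BS0 inE.
  exact/FQ/facet_ideal_monom.
have [H sHF [cardH covH]] := tree_trace_cover leafy (subxx F) meetS.
exists #|H|, [seq facet_monom k A | A <- enum H].
split; first by rewrite size_map -cardE.
split; first by apply: (facet_ideal_loc_generates (S := S)) => // i Qi; apply/inS.
have leHS : (#|H| <= size (enum S))%N by rewrite -cardE.
rewrite -(size_takel leHS); apply: height_ge_vars => //.
  exact/take_uniq/enum_uniq.
by move=> j /mem_take; rewrite mem_enum => /inS.
Qed.
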